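(* Let $\beta,\mu,\tau>0$ be constants, let $g(x)=\dfrac{g^-\theta_g^n+g^+x^n}{\theta_g^n+x^n}$ with $g^\pm,\theta_g,n>0$, and put $g_0=\min\{g^-,g^+\}$, $g_U=\max\{g^-,g^+\}$. For $\xi>0$ let $\gamma=\gamma(\xi)=\frac{\beta}{\xi}e^{-\mu\tau}g(\xi)$, let $k\ge0$ be an integer and let $\omega_k>0$ satisfy $\omega_k\cot(\omega_k\tau)=-\gamma$ and $\omega_k\tau\in(\pi/2+2k\pi,\pi+2k\pi)$. Let $s_k(\xi)=\sqrt{1+(\omega_k/\gamma)^2}$. Then for all $\xi>0$: (1) $m_k(\xi)\le s_k(\xi)\le M_k(\xi)$, where $$m_k(\xi)=\Big(1+\Big(\frac{\pi(2k+1/2)}{\beta\tau e^{-\mu\tau}g_U}\Big)^2\xi^2\Big)^{1/2},\qquad M_k(\xi)=\Big(1+\Big(\frac{\pi(2k+1)}{\beta\tau e^{-\mu\tau}g_0}\Big)^2\xi^2\Big)^{1/2};$$ (2) $1<s_k(\xi)<1+\frac{\pi(2k+1)}{\beta\tau e^{-\mu\tau}g_0}\,\xi$. *)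

From Stdlib Require Export Reals.
Open Scope R_scope.

Definition hill (gm gp theta n x : R) : R :=
  (gm * Rpower theta n + gp * Rpower x n) / (Rpower theta n + Rpower x n).

Definition cot (y : R) : R := cos y / sin y.

Definition gamma_xi (beta mu tau gm gp theta n xi : R) : R :=
  beta / xi * exp (- mu * tau) * hill gm gp theta n xi.

(** Only the location of [omega * tau] in [(PI/2 + 2 k PI, PI + 2 k PI)] is
    needed, not the characteristic equation itself.  Since
    [omega / gamma = xi (omega tau) / (beta tau e^{-mu tau} g(xi))] and the
    Hill function [g] is a weighted mean of [g^-] and [g^+], hence lies in
    [[g0, gU]], the ratio [omega / gamma] is squeezed between the linear
    functions of [xi] under the square roots of [m_k] and [M_k]; the bounds
    follow by monotonicity of [t |-> sqrt (1 + t^2)] and from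
    [1 < sqrt (1 + t^2) < 1 + t] for [t > 0]. *)
From Stdlib Require Import Reals Lra.
Open Scope R_scope.

Lemma weighted_mean_between (u v a b : R) : 0 < a -> 0 < b ->
  Rmin u v <= (u * a + v * b) / (a + b) <= Rmax u v.
Proof.
  intros Ha Hb.
  assert (Hmin := Rmin_l u v). assert (Hmin' := Rmin_r u v).
  assert (Hmax := Rmax_l u v). assert (Hmax' := Rmax_r u v).
  split; apply (Rmult_le_reg_r (a + b)); try lra;
    unfold Rdiv; rewrite Rmult_assoc, Rinv_l, Rmult_1_r by lra; nra.
Qed.

(* [Rpower x y = exp (y * ln x)], so this holds even for [x <= 0], where [ln] is junk. *)
Lemma Rpower_pos (x y : R) : 0 < Rpower x y.
Proof. apply exp_pos. Qed.

Lemma hill_between (gm gp theta n x : R) :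
  Rmin gm gp <= hill gm gp theta n x <= Rmax gm gp.
Proof. apply weighted_mean_between; apply Rpower_pos. Qed.

Lemma div_le_div_bounds (p w q lo g hi : R) :
  0 < p -> p <= w <= q -> 0 < lo -> lo <= g <= hi ->
  p / hi <= w / g <= q / lo.
Proof.
  intros Hp Hw Hlo Hg.
  split; apply Rmult_le_compat; try lra;
    try (left; apply Rinv_0_lt_compat; lra);
    apply Rinv_le_contravar; lra.
Qed.

Lemma omega_div_gamma_xi (beta mu tau gm gp theta n xi omega : R) :
  0 < beta -> 0 < tau -> 0 < xi -> 0 < hill gm gp theta n xi ->
  omega / gamma_xi beta mu tau gm gp theta n xi =
  xi / (beta * tau * exp (- mu * tau)) * (omega * tau / hill gm gp theta n xi).
Proof.
  intros Hbeta Htau Hxi Hg.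
  assert (HE := exp_pos (- mu * tau)).
  unfold gamma_xi; field; repeat split; lra.
Qed.

Lemma omega_div_gamma_xi_bounds (beta mu tau gm gp theta n xi omega : R) (k : nat) :
  0 < beta -> 0 < tau -> 0 < gm -> 0 < gp -> 0 < xi ->
  PI / 2 + 2 * INR k * PI < omega * tau < PI + 2 * INR k * PI ->
  PI * (2 * INR k + 1 / 2) / (beta * tau * exp (- mu * tau) * Rmax gm gp) * xi
    <= omega / gamma_xi beta mu tau gm gp theta n xi <=
  PI * (2 * INR k + 1) / (beta * tau * exp (- mu * tau) * Rmin gm gp) * xi.
Proof.
  intros Hbeta Htau Hgm Hgp Hxi Hw.
  assert (HE := exp_pos (- mu * tau)).
  assert (Hc : 0 < beta * tau * exp (- mu * tau))
    by (repeat apply Rmult_lt_0_compat; lra).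
  assert (Hg0 : 0 < Rmin gm gp) by (apply Rmin_pos; lra).
  assert (Hg := hill_between gm gp theta n xi).
  assert (HPI := PI_RGT_0). assert (Hk := pos_INR k).
  assert (Hratio :
    PI * (2 * INR k + 1 / 2) / Rmax gm gp <= omega * tau / hill gm gp theta n xi
      <= PI * (2 * INR k + 1) / Rmin gm gp)
    by (apply div_le_div_bounds; nra).
  rewrite omega_div_gamma_xi by lra.
  assert (Hd : 0 < xi / (beta * tau * exp (- mu * tau))) by (apply Rdiv_lt_0_compat; lra).
  replace (PI * (2 * INR k + 1 / 2) / (beta * tau * exp (- mu * tau) * Rmax gm gp) * xi)
    with (xi / (beta * tau * exp (- mu * tau)) * (PI * (2 * INR k + 1 / 2) / Rmax gm gp))
    by (field; split; lra).
  replace (PI * (2 * INR k + 1) / (beta * tau * exp (- mu * tau) * Rmin gm gp) * xi)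
    with (xi / (beta * tau * exp (- mu * tau)) * (PI * (2 * INR k + 1) / Rmin gm gp))
    by (field; split; lra).
  split; apply Rmult_le_compat_l; lra.
Qed.

Lemma sqrt_1_plus_sqr_le (a b : R) : 0 <= a <= b -> sqrt (1 + a ^ 2) <= sqrt (1 + b ^ 2).
Proof. intros Hab; apply sqrt_le_1_alt; apply Rplus_le_compat_l, pow_incr; lra. Qed.

Lemma sqrt_1_plus_sqr_bounds (t : R) : 0 < t -> 1 < sqrt (1 + t ^ 2) < 1 + t.
Proof.
  intros Ht; split.
  - rewrite <- sqrt_1 at 1; apply sqrt_lt_1_alt; nra.
  - rewrite <- (sqrt_pow2 (1 + t)) by lra; apply sqrt_lt_1_alt; nra.
Qed.

Theorem proposition5p2 :
  forall (beta mu tau gm gp theta n : R),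
  0 < beta -> 0 < mu -> 0 < tau ->
  0 < gm -> 0 < gp -> 0 < theta -> 0 < n ->
  forall (xi : R) (k : nat) (omega : R),
  0 < xi ->
  0 < omega ->
  omega * cot (omega * tau) = - gamma_xi beta mu tau gm gp theta n xi ->
  PI / 2 + 2 * INR k * PI < omega * tau < PI + 2 * INR k * PI ->
  let g0 := Rmin gm gp in
  let gU := Rmax gm gp in
  let gam := gamma_xi beta mu tau gm gp theta n xi in
  let s := sqrt (1 + (omega / gam) ^ 2) in
  let mk := sqrt (1 + (PI * (2 * INR k + 1 / 2) / (beta * tau * exp (- mu * tau) * gU)) ^ 2 * xi ^ 2) in
  let Mk := sqrt (1 + (PI * (2 * INR k + 1) / (beta * tau * exp (- mu * tau) * g0)) ^ 2 * xi ^ 2) in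
  (mk <= s <= Mk) /\
  (1 < s < 1 + PI * (2 * INR k + 1) / (beta * tau * exp (- mu * tau) * g0) * xi).
Proof.
  intros beta mu tau gm gp theta n Hbeta _ Htau Hgm Hgp _ _ xi k omega Hxi _ _ Hw.
  intros g0 gU gam s mk Mk.
  assert (Hx := omega_div_gamma_xi_bounds beta mu tau gm gp theta n xi omega k
                  Hbeta Htau Hgm Hgp Hxi Hw).
  fold g0 gU gam in Hx.
  set (A := PI * (2 * INR k + 1 / 2) / (beta * tau * exp (- mu * tau) * gU)) in *.
  set (B := PI * (2 * INR k + 1) / (beta * tau * exp (- mu * tau) * g0)) in *.
  assert (HA : 0 < A * xi).
  { assert (HPI := PI_RGT_0). assert (Hk := pos_INR k).
    assert (HgU : 0 < gU) by (apply (Rlt_le_trans _ gm); [lra | apply Rmax_l]).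
    assert (HE := exp_pos (- mu * tau)).
    apply Rmult_lt_0_compat; [apply Rdiv_lt_0_compat |]; try nra.
    repeat apply Rmult_lt_0_compat; lra. }
  unfold mk, Mk; rewrite <- !Rpow_mult_distr.
  assert (Hs := sqrt_1_plus_sqr_bounds (omega / gam) ltac:(lra)).
  split; [split; apply sqrt_1_plus_sqr_le; lra | fold s in Hs; lra].
Qed.
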